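(* Let $g(x)=\left(1+\frac{1}{x}\right)^{x}$ for $x>0$. There is an expansion $g(x)=\sum_{j=0}^{\infty}\frac{c_j}{x^j}$ which converges for $x>1$, where the coefficients $c_j$ are given recursively by $c_0=e$ and $$c_{j+1}=\frac{1}{j+1}\sum_{l=0}^{j}(-1)^{j-l+1}\left(\frac{j-l+1}{j-l+2}\right)c_l\qquad (j=0,1,2,\dots).$$ Moreover, as $j\to\infty$, $$c_j=(-1)^j\left(1+\frac{1}{j}\right)+\mathcal{O}\!\left(\frac{\ln j}{j^2}\right).$$
   Context: Here $e$ is Euler's number. The expansion is the (asymptotic, and in fact convergent) expansion of $g(x)$ in powers of $1/x$ for large $x$; equivalently, $c_j$ are the Maclaurin coefficients of $f(z)=(1+z)^{1/z}=\exp\{z^{-1}\ln(1+z)\}$, with the removable singularity at $z=0$ filled in by $f(0)=e$. *)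

From Stdlib Require Import Reals.
From Coquelicot Require Import Coquelicot.
Open Scope R_scope.

Definition g (x : R) : R := Rpower (1 + / x) x.

Definition coeff_rec (c : nat -> R) : Prop :=
  c 0%nat = exp 1 /\
  forall j : nat,
    c (S j) = / INR (S j) *
      sum_f_R0 (fun l => (-1) ^ (j - l + 1) *
                         (INR (j - l + 1) / INR (j - l + 2)) * c l) j.

From Stdlib Require Import Reals Lra Lia.
From Coquelicot Require Import Coquelicot.
Open Scope R_scope.

(* The recursion says that f = sum_j c_j z^j satisfies f' = f L' with
   L(z) = ln(1 + z) / z = sum_k (-1)^k z^k / (k + 1), and f(0) = e = exp (L 0);
   so f = exp L = (1 + z)^(1/z) on |z| < 1 and g(x) = f(1/x).
   For the asymptotics, [alt j = (-1)^j c_j] and [alt_diff] are the coefficients of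
   f(-z) and (1 - z) f(-z).  The logarithmic derivative of the latter is
   -sum_m z^m / (m + 2), which gives a convolution recursion for [alt_diff]; it
   bootstraps to alt_diff j = O(1/j^2), so [alt] converges at rate O(1/j).  Abel
   summation at z -> 1-, where (1 - z) f(-z) = (1 - z)^(1 - 1/z) -> 1, identifies the
   limit as 1.  Feeding alt j = 1 + O(1/j) back into the recursion gives
   alt_diff (j + 1) = -1/((j + 1)(j + 2)) + O(ln j / j^3), and summing the tail yields
   alt j = 1 + 1/(j + 1) + O(ln j / j^2). *)

Lemma INR_S_pos (n : nat) : 0 < INR (S n).
Proof. apply lt_0_INR; lia. Qed.

Lemma Rbar_lt_CV_radius_bounded (a : nat -> R) (B x : R) :
  (forall n, Rabs (a n) <= B) -> Rabs x < 1 -> Rbar_lt (Rabs x) (CV_radius a).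
Proof.
  intros HB Hx.
  apply Rbar_lt_le_trans with (Finite 1); [exact Hx |].
  apply (proj1 (CV_radius_bounded a)).
  exists B; intro n. rewrite pow1, Rmult_1_r. apply HB.
Qed.

Lemma is_derive_0_const (f : R -> R) :
  (forall x, Rabs x < 1 -> is_derive f x 0) ->
  forall z, Rabs z < 1 -> f z = f 0.
Proof.
  intros Hd z Hz.
  assert (Hin : forall x, Rmin 0 z <= x <= Rmax 0 z -> Rabs x < 1).
  { intros x Hx. apply Rabs_def2 in Hz. apply Rabs_def1;
      unfold Rmin, Rmax in Hx; destruct (Rle_dec 0 z); lra. }
  destruct (MVT_gen f 0 z (fun _ => 0)) as [y [_ Hy]].
  - intros x Hx. apply Hd, Hin. lra.
  - intros x Hx. apply continuity_pt_filterlim.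
    apply (ex_derive_continuous f x). exists 0. now apply Hd, Hin.
  - lra.
Qed.

Lemma is_series_Rabs_le (a b : nat -> R) (la lb : R) :
  is_series a la -> is_series b lb -> (forall n, Rabs (a n) <= b n) -> Rabs la <= lb.
Proof.
  intros Ha Hb Hab.
  apply (is_lim_seq_le (fun n => Rabs (sum_n a n)) (sum_n b) (Rabs la) lb).
  - intro n. rewrite !sum_n_Reals.
    eapply Rle_trans; [apply sum_f_R0_triangle | apply sum_Rle; auto].
  - exact (is_lim_seq_abs _ la Ha).
  - exact Hb.
Qed.

Definition lncoef (k : nat) : R := (-1) ^ k / INR (S k).

Lemma Rabs_lncoef_le_1 (k : nat) : Rabs (lncoef k) <= 1.
Proof.
  unfold lncoef, Rdiv.
  rewrite Rabs_mult, pow_1_abs, Rabs_inv, Rabs_pos_eq by apply pos_INR.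
  rewrite Rmult_1_l, <- Rinv_1. apply Rinv_le_contravar; [lra |].
  rewrite S_INR. pose proof (pos_INR k). lra.
Qed.

Lemma PSeries_alt_geom (x : R) : Rabs x < 1 -> PSeries (fun n => (-1) ^ n) x = / (1 + x).
Proof.
  intro Hx. apply is_pseries_unique.
  replace (/ (1 + x)) with (/ (1 - - x)) by (f_equal; ring).
  eapply is_series_ext; [| apply is_series_geom; now rewrite Rabs_Ropp].
  intro n. rewrite pow_n_pow. unfold scal; simpl. unfold mult; simpl.
  rewrite <- Rpow_mult_distr. f_equal. ring.
Qed.

Lemma PSeries_lncoef (z : R) : Rabs z < 1 -> z * PSeries lncoef z = ln (1 + z).
Proof.
  intro Hz.
  set (h := fun x => PSeries (PS_incr_1 lncoef) x - ln (1 + x)).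
  assert (Hh : forall x, Rabs x < 1 -> is_derive h x 0).
  { intros x Hx.
    assert (Hr : Rbar_lt (Rabs x) (CV_radius (PS_incr_1 lncoef))).
    { rewrite CV_radius_incr_1. exact (Rbar_lt_CV_radius_bounded _ _ _ Rabs_lncoef_le_1 Hx). }
    assert (Hln : is_derive (fun y => ln (1 + y)) x (/ (1 + x))).
    { apply Rabs_def2 in Hx. auto_derive; [lra | field; lra]. }
    unfold h. replace 0 with (minus (PSeries (PS_derive (PS_incr_1 lncoef)) x) (/ (1 + x))).
    { exact (is_derive_minus _ _ _ _ _ (is_derive_PSeries _ x Hr) Hln). }
    rewrite (PSeries_ext _ (fun n => (-1) ^ n)), (PSeries_alt_geom x Hx).
    - unfold minus, plus, opp; simpl. ring.
    - intro n. unfold PS_derive, PS_incr_1, lncoef. field. apply not_0_INR; lia. }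
  pose proof (is_derive_0_const h Hh z Hz) as E. unfold h in E.
  rewrite PSeries_0, PSeries_incr_1 in E. simpl in E.
  rewrite Rplus_0_r, ln_1 in E. change (zero - 0) with (0 - 0) in E. lra.
Qed.

Lemma sum_f_R0_ge_term (a : nat -> R) (n N : nat) :
  (forall i, 0 <= a i) -> (n <= N)%nat -> a n <= sum_f_R0 a N.
Proof.
  intros Ha HnN. induction HnN as [| N HnN IH].
  - destruct n as [| n]; simpl; [lra |].
    pose proof (cond_pos_sum a n Ha). lra.
  - rewrite tech5. pose proof (Ha (S N)). lra.
Qed.

Lemma pow_m1_S_mul (j l : nat) : (l <= j)%nat -> (-1) ^ S j * (-1) ^ (j - l + 1) = (-1) ^ l.
Proof.
  intro Hl. rewrite <- pow_add.
  replace (S j + (j - l + 1))%nat with (l + 2 * (j - l + 1))%nat by lia.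
  rewrite pow_add, pow_mult. replace ((-1) ^ 2) with 1 by ring. rewrite pow1. ring.
Qed.

Lemma pow_m1_sqr (n : nat) : (-1) ^ n * (-1) ^ n = 1.
Proof. rewrite <- Rpow_mult_distr. replace (-1 * -1) with 1 by ring. apply pow1. Qed.

Fixpoint harm (n : nat) : R :=
  match n with 0%nat => 0 | S k => harm k + / INR (S k) end.

Lemma sum_inv_INR_S (j : nat) : sum_f_R0 (fun l => / INR (S l)) j = harm (S j).
Proof. induction j as [| j IH]; [simpl; ring |]. rewrite tech5, IH. reflexivity. Qed.

Lemma harm_ge_0 (n : nat) : 0 <= harm n.
Proof.
  induction n as [| n IH]; cbn [harm]; [lra |].
  pose proof (Rinv_0_lt_compat _ (INR_S_pos n)). lra.
Qed.

Lemma harm_ge_1 (n : nat) : (1 <= n)%nat -> 1 <= harm n.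
Proof.
  intro Hn. induction Hn as [| n Hn IH]; cbn [harm].
  - simpl. lra.
  - pose proof (Rinv_0_lt_compat _ (INR_S_pos n)). lra.
Qed.

Lemma harm_le_INR (n : nat) : harm n <= INR n.
Proof.
  induction n as [| n IH]; cbn [harm]; [simpl; lra |].
  pose proof (S_INR n). pose proof (pos_INR n).
  assert (/ INR (S n) <= 1).
  { rewrite <- Rinv_1. apply Rinv_le_contravar; lra. }
  lra.
Qed.

Lemma harm_le_linear (n : nat) : (16 <= n)%nat -> 8 * harm n <= INR n / 2 + 120.
Proof.
  intro Hn. induction Hn as [| n Hn IH].
  - pose proof (harm_le_INR 16). replace (INR 16) with 16 in * by (simpl; ring). lra.
  - cbn [harm]. pose proof (S_INR n).
    assert (H16 : 16 <= INR n) by (replace 16 with (INR 16) by (simpl; ring); now apply le_INR).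
    assert (8 * / INR (S n) <= 1 / 2).
    { apply Rmult_le_reg_r with (INR (S n)); [lra |].
      rewrite Rmult_assoc, Rinv_l by lra. lra. }
    lra.
Qed.

Lemma harm_le_1_ln (n : nat) : (1 <= n)%nat -> harm n <= 1 + ln (INR n).
Proof.
  intro Hn. induction Hn as [| n Hn IH]; cbn [harm].
  - simpl. rewrite ln_1. lra.
  - assert (Hn0 : 0 < INR n) by (apply lt_0_INR; lia).
    pose proof (INR_S_pos n).
    pose proof (exp_ineq1_le (ln (INR n / INR (S n)))) as E.
    rewrite exp_ln, ln_div in E by (try apply Rdiv_lt_0_compat; lra).
    replace (INR n / INR (S n)) with (1 - / INR (S n)) in E by (rewrite S_INR; field; lra).
    lra.
Qed.

Lemma Rdiv_succ_le_1 (a : R) : 0 <= a -> a / (a + 1) <= 1.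
Proof.
  intro Ha. apply Rmult_le_reg_r with (a + 1); [lra |].
  unfold Rdiv. rewrite Rmult_assoc, Rinv_l by lra. lra.
Qed.

Definition logder_coef (m : nat) : R := / INR (S (S m)).

Lemma logder_coef_gap (l j : nat) : (l <= j)%nat ->
  0 <= logder_coef (j - l) - logder_coef j /\
  (logder_coef (j - l) - logder_coef j) / INR (S l) ^ 2
    <= / (INR j + 2) * / (INR (S l) * INR (S (S (j - l)))).
Proof.
  intro Hl. unfold logder_coef. rewrite !S_INR, minus_INR by lia.
  assert (Hlj : INR l <= INR j) by (apply le_INR; lia).
  pose proof (pos_INR l).
  set (a := INR l) in *. set (b := INR j) in *.
  replace (/ (b - a + 1 + 1) - / (b + 1 + 1)) with (a / ((b - a + 2) * (b + 2))) by (field; lra).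
  split.
  - apply Rdiv_le_0_compat; nra.
  - assert (Hfrac : a / (a + 1) <= 1) by (apply Rdiv_succ_le_1; lra).
    replace (a / ((b - a + 2) * (b + 2)) / (a + 1) ^ 2)
      with (/ (b + 2) * / ((a + 1) * (b - a + 1 + 1)) * (a / (a + 1))) by (field; lra).
    rewrite <- (Rmult_1_r (/ (b + 2) * / ((a + 1) * (b - a + 1 + 1)))) at 2.
    apply Rmult_le_compat_l; [| exact Hfrac].
    apply Rmult_le_pos; left; apply Rinv_0_lt_compat; nra.
Qed.

Lemma sum_inv_convolution (j : nat) :
  sum_f_R0 (fun l => / (INR (S l) * INR (S (S (j - l))))) j <= 2 * harm (S j) / (INR j + 3).
Proof.
  pose proof (pos_INR j).
  rewrite (sum_eq _ (fun l => (/ INR (S l) + / INR (S (S (j - l)))) * / (INR j + 3))).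
  2: { intros l Hl. rewrite !S_INR, minus_INR by lia.
       assert (INR l <= INR j) by (apply le_INR; lia). pose proof (pos_INR l).
       field. lra. }
  rewrite <- (scal_sum (fun l => / INR (S l) + / INR (S (S (j - l))))), plus_sum.
  rewrite (sum_f_R0_skip (fun m => / INR (S (S m))) j), sum_inv_INR_S.
  assert (sum_f_R0 (fun m => / INR (S (S m))) j <= harm (S j)).
  { rewrite <- sum_inv_INR_S. apply sum_Rle; intros m _.
    apply Rinv_le_contravar; [apply INR_S_pos | apply le_INR; lia]. }
  unfold Rdiv. rewrite (Rmult_comm (2 * harm (S j))).
  apply Rmult_le_compat_l; [left; apply Rinv_0_lt_compat |]; lra.
Qed.

Lemma convolution_tail_bound (u : nat -> R) (M : R) (j : nat) : 0 <= M ->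
  (forall l, (l <= j)%nat -> Rabs (u l) <= M / INR (S l) ^ 2) ->
  Rabs (sum_f_R0 (fun l => u l * (logder_coef (j - l) - logder_coef j)) j)
    <= M / (INR j + 2) * (2 * harm (S j) / (INR j + 3)).
Proof.
  intros HM Hu. pose proof (pos_INR j).
  eapply Rle_trans; [apply sum_f_R0_triangle |].
  eapply Rle_trans; [| apply Rmult_le_compat_l; [| apply sum_inv_convolution]].
  2: { apply Rdiv_le_0_compat; lra. }
  rewrite scal_sum. apply sum_Rle; intros l Hl.
  destruct (logder_coef_gap l j Hl) as [G0 G1].
  rewrite Rabs_mult, (Rabs_pos_eq _ G0).
  apply Rle_trans with (M / INR (S l) ^ 2 * (logder_coef (j - l) - logder_coef j)).
  - apply Rmult_le_compat_r; auto.
  - replace (M / INR (S l) ^ 2 * (logder_coef (j - l) - logder_coef j))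
      with (M * ((logder_coef (j - l) - logder_coef j) / INR (S l) ^ 2)) by (unfold Rdiv; ring).
    replace (/ (INR (S l) * INR (S (S (j - l)))) * (M / (INR j + 2)))
      with (M * (/ (INR j + 2) * / (INR (S l) * INR (S (S (j - l)))))) by (unfold Rdiv; ring).
    apply Rmult_le_compat_l; assumption.
Qed.

Lemma harm_contraction (j : nat) : (240 <= j)%nat -> 2 * harm (S j) / (INR j + 3) <= 1 / 4.
Proof.
  intro Hj. pose proof (harm_le_linear (S j) ltac:(lia)) as H. rewrite S_INR in H.
  assert (240 <= INR j) by (replace 240 with (INR 240) by (simpl; ring); now apply le_INR).
  apply Rmult_le_reg_r with (INR j + 3); [lra |].
  unfold Rdiv. rewrite Rmult_assoc, Rinv_l by lra. lra.
Qed.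

Lemma inv_INR_sqr_le_sub (m : nat) :
  / INR (S (S m)) ^ 2 <= / INR (S m) - / INR (S (S m)).
Proof.
  rewrite (S_INR (S m)). pose proof (INR_S_pos m).
  replace (/ INR (S m) - / (INR (S m) + 1)) with (/ (INR (S m) * (INR (S m) + 1))) by (field; lra).
  apply Rinv_le_contravar; nra.
Qed.

Lemma is_lim_seq_inv_INR_S : is_lim_seq (fun n => / INR (S n)) 0.
Proof.
  replace (Finite 0) with (Rbar_inv p_infty) by reflexivity.
  apply is_lim_seq_inv; [| discriminate].
  now apply (is_lim_seq_incr_1 INR p_infty), is_lim_seq_INR.
Qed.

Lemma telescoping_increment_bound (u V : nat -> R) (j : nat) :
  (forall m, (j <= m)%nat -> Rabs (u (S m) - u m) <= V m - V (S m)) ->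
  forall n, Rabs (u (n + j)%nat - u j) <= V j - V (n + j)%nat.
Proof.
  intros Hinc n. induction n as [| n IH]; simpl.
  - rewrite !Rminus_diag, Rabs_R0. lra.
  - replace (u (S (n + j)) - u j) with ((u (S (n + j)) - u (n + j)%nat) + (u (n + j)%nat - u j))
      by ring.
    eapply Rle_trans; [apply Rabs_triang |].
    pose proof (Hinc (n + j)%nat ltac:(lia)). lra.
Qed.

Lemma ex_finite_lim_seq_telescoping (u V : nat -> R) :
  (forall m, Rabs (u (S m) - u m) <= V m - V (S m)) -> is_lim_seq V 0 -> ex_finite_lim_seq u.
Proof.
  intros Hinc HV. apply ex_lim_seq_cauchy_corr. intro eps.
  assert (CV : ex_lim_seq_cauchy V) by (apply ex_lim_seq_cauchy_corr; now exists 0).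
  destruct (CV (pos_div_2 eps)) as [N HN]. exists N. intros n m Hn Hm.
  pose proof (telescoping_increment_bound u V N (fun k _ => Hinc k)) as B.
  pose proof (B (n - N)%nat) as Bn. pose proof (B (m - N)%nat) as Bm.
  replace (n - N + N)%nat with n in Bn by lia. replace (m - N + N)%nat with m in Bm by lia.
  pose proof (HN N n (le_n N) Hn) as Vn. pose proof (HN N m (le_n N) Hm) as Vm. simpl in Vn, Vm.
  pose proof (Rle_abs (V N - V n)). pose proof (Rle_abs (V N - V m)).
  replace (u n - u m) with ((u n - u N) - (u m - u N)) by ring.
  eapply Rle_lt_trans; [apply Rabs_triang |]. rewrite Rabs_Ropp. lra.
Qed.

Lemma lim_dist_le_telescoping (u V : nat -> R) (L : R) (j : nat) :
  is_lim_seq u L ->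
  (forall m, (j <= m)%nat -> Rabs (u (S m) - u m) <= V m - V (S m)) ->
  (forall m, (j <= m)%nat -> 0 <= V m) ->
  Rabs (u j - L) <= V j.
Proof.
  intros Hu Hinc HV.
  assert (Hb : forall n, Rabs (u (n + j)%nat - u j) <= V j).
  { intro n. pose proof (telescoping_increment_bound u V j Hinc n).
    pose proof (HV (n + j)%nat ltac:(lia)). lra. }
  rewrite Rabs_minus_sym.
  refine (is_lim_seq_le _ _ (Rabs (L - u j)) (V j) Hb _ (is_lim_seq_const _)).
  apply (is_lim_seq_abs _ (L - u j)), is_lim_seq_minus'; [| apply is_lim_seq_const].
  now apply (is_lim_seq_incr_n u j L).
Qed.

Lemma exp_ge_sqr_div_4 (k : R) : 0 < k -> k ^ 2 / 4 <= exp k.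
Proof.
  intro Hk. replace k with (k / 2 + k / 2) at 2 by field. rewrite exp_plus.
  pose proof (exp_ineq1_le (k / 2)). nra.
Qed.

Lemma exp_sub_1_le (a : R) : 0 <= a <= 1 / 2 -> 0 <= exp a - 1 <= 2 * a.
Proof.
  intro Ha. pose proof (exp_ineq1_le a). pose proof (exp_ineq1_le (- a)).
  assert (exp a * exp (- a) = 1) by (rewrite <- exp_plus, Rplus_opp_r; apply exp_0).
  pose proof (exp_pos a). nra.
Qed.

Lemma xlnx_small (eps : R) : 0 < eps ->
  exists t, 0 < t < 1 /\ 0 <= - ((1 - t) * ln (1 - t)) / t <= eps.
Proof.
  intro Heps.
  set (k := Rmax 16 (8 / eps)).
  assert (Hk16 : 16 <= k) by apply Rmax_l.
  assert (Hk8 : 8 / eps <= k) by apply Rmax_r.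
  set (u := exp (- k)).
  assert (Hu0 : 0 < u) by apply exp_pos.
  assert (Hu4 : u * k ^ 2 <= 4).
  { assert (exp k * u = 1) by (unfold u; rewrite <- exp_plus, Rplus_opp_r; apply exp_0).
    pose proof (exp_ge_sqr_div_4 k ltac:(lra)). nra. }
  assert (Hlnu : ln u = - k) by apply ln_exp.
  assert (Hu2 : u <= 1 / 2) by nra.
  assert (Hek : 8 <= eps * k).
  { replace 8 with (eps * (8 / eps)) by (field; lra). apply Rmult_le_compat_l; lra. }
  exists (1 - u).
  replace (1 - (1 - u)) with u by ring. rewrite Hlnu.
  split; [lra |]. split.
  - apply Rdiv_le_0_compat; nra.
  - (* the quantity is k u / (1 - u) <= 2 k u <= 8 / k *)
    apply Rmult_le_reg_r with (1 - u); [lra |].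
    unfold Rdiv. rewrite Rmult_assoc, Rinv_l, Rmult_1_r by lra.
    apply Rmult_le_reg_r with k; [lra |]. nra.
Qed.

Definition harm_majorant (m : nat) : R := (harm m + 1) / (INR m * INR (S m)).

Lemma harm_majorant_ge_0 (m : nat) : (1 <= m)%nat -> 0 <= harm_majorant m.
Proof.
  intro Hm. unfold harm_majorant. pose proof (harm_ge_0 m).
  apply Rdiv_le_0_compat; [lra |].
  apply Rmult_lt_0_compat; apply lt_0_INR; lia.
Qed.

Lemma harm_majorant_diff (m : nat) : (1 <= m)%nat ->
  harm (S m) / (INR (S m) ^ 2 * INR (S (S m))) <= harm_majorant m - harm_majorant (S m).
Proof.
  intro Hm. unfold harm_majorant. cbn [harm]. rewrite !S_INR.
  assert (Ha : 1 <= INR m) by (replace 1 with (INR 1) by reflexivity; now apply le_INR).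
  pose proof (harm_ge_0 m) as Hh.
  set (a := INR m) in *. set (h := harm m) in *.
  assert (E : (h + 1) / (a * (a + 1)) - (h + / (a + 1) + 1) / ((a + 1) * (a + 1 + 1))
      - (h + / (a + 1)) / ((a + 1) ^ 2 * (a + 1 + 1))
    = (h * a + 2 * h + a + 2 - a / (a + 1)) / (a * (a + 1) ^ 2 * (a + 2))) by (field; lra).
  assert (a / (a + 1) <= 1) by (apply Rdiv_succ_le_1; lra).
  assert (0 <= (h * a + 2 * h + a + 2 - a / (a + 1)) / (a * (a + 1) ^ 2 * (a + 2)))
    by (apply Rdiv_le_0_compat; [nra | apply Rmult_lt_0_compat; [nra | lra]]).
  lra.
Qed.

Lemma recursion_weight_bounds (m : nat) : 0 <= INR (m + 1) / INR (m + 2) <= 1.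
Proof.
  replace (m + 2)%nat with (S (m + 1)) by lia. rewrite S_INR.
  pose proof (pos_INR (m + 1)).
  split; [apply Rdiv_le_0_compat; lra |].
  apply Rmult_le_reg_r with (INR (m + 1) + 1); [lra |].
  unfold Rdiv. rewrite Rmult_assoc, Rinv_l by lra. lra.
Qed.

Section Coefficients.

Variable c : nat -> R.
Hypothesis Hc : coeff_rec c.

Lemma Rabs_coeff_le_e (j : nat) : Rabs (c j) <= exp 1.
Proof.
  destruct Hc as [H0 HS].
  induction j as [[| n] IH] using Wf_nat.lt_wf_ind.
  - rewrite H0, Rabs_pos_eq; [lra | left; apply exp_pos].
  - rewrite HS, Rabs_mult, Rabs_inv, Rabs_pos_eq by apply pos_INR.
    apply Rmult_le_reg_l with (INR (S n)); [apply INR_S_pos |].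
    rewrite <- Rmult_assoc, Rinv_r, Rmult_1_l by (apply not_0_INR; lia).
    eapply Rle_trans; [apply sum_f_R0_triangle |].
    apply Rle_trans with (sum_f_R0 (fun _ => exp 1) n); [| rewrite sum_cte; lra].
    apply sum_Rle; intros l Hl.
    rewrite !Rabs_mult, pow_1_abs, Rmult_1_l.
    destruct (recursion_weight_bounds (n - l)) as [W0 W1].
    rewrite (Rabs_pos_eq _ W0).
    pose proof (IH l ltac:(lia)). pose proof (Rabs_pos (c l)).
    rewrite <- (Rmult_1_l (exp 1)). apply Rmult_le_compat; lra.
Qed.

Lemma PS_derive_coeff (j : nat) : PS_derive c j = PS_mult c (PS_derive lncoef) j.
Proof.
  destruct Hc as [_ HS]. unfold PS_derive, PS_mult. rewrite HS.
  rewrite <- Rmult_assoc, Rinv_r, Rmult_1_l by (apply not_0_INR; lia).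
  apply sum_eq; intros l Hl. unfold lncoef.
  replace (j - l + 1)%nat with (S (j - l)) by lia.
  replace (j - l + 2)%nat with (S (S (j - l))) by lia.
  field. repeat split; apply not_0_INR; lia.
Qed.

Lemma PSeries_coeff (z : R) : Rabs z < 1 -> PSeries c z = exp (PSeries lncoef z).
Proof.
  set (Q := fun x => PSeries c x * exp (- PSeries lncoef x)).
  assert (HQ : forall x, Rabs x < 1 -> is_derive Q x 0).
  { intros x Hx.
    pose proof (Rbar_lt_CV_radius_bounded _ _ _ Rabs_coeff_le_e Hx) as Rc.
    pose proof (Rbar_lt_CV_radius_bounded _ _ _ Rabs_lncoef_le_1 Hx) as Rl.
    assert (Rdl : Rbar_lt (Rabs x) (CV_radius (PS_derive lncoef)))
      by (rewrite CV_radius_derive; auto).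
    assert (Ec : PSeries (PS_derive c) x = PSeries c x * PSeries (PS_derive lncoef) x).
    { rewrite <- PSeries_mult by auto. apply PSeries_ext, PS_derive_coeff. }
    pose proof (is_derive_PSeries c x Rc) as Dc. rewrite Ec in Dc.
    pose proof (is_derive_comp exp (fun y => opp (PSeries lncoef y)) x _ _
      (is_derive_exp _) (is_derive_opp _ _ _ (is_derive_PSeries lncoef x Rl))) as De.
    pose proof (is_derive_mult _ _ _ _ _ Dc De Rmult_comm) as DQ.
    unfold Q. replace 0 with
      (plus (mult (PSeries c x * PSeries (PS_derive lncoef) x) (exp (opp (PSeries lncoef x))))
        (mult (PSeries c x) (scal (opp (PSeries (PS_derive lncoef) x)) (exp (opp (PSeries lncoef x)))))).
    - exact DQ.
    - unfold plus, mult, scal, opp; simpl. unfold mult; simpl. ring. }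
  intro Hz.
  pose proof (is_derive_0_const Q HQ z Hz) as E. unfold Q in E.
  rewrite !PSeries_0, (proj1 Hc) in E.
  replace (lncoef 0) with 1 in E by (unfold lncoef; simpl; field).
  rewrite <- exp_plus, Rplus_opp_r, exp_0 in E.
  apply Rmult_eq_reg_r with (exp (- PSeries lncoef z)); [| apply Rgt_not_eq, exp_pos].
  rewrite E, <- exp_plus, Rplus_opp_r, exp_0. reflexivity.
Qed.

Lemma is_series_g (x : R) : 1 < x -> is_series (fun j => c j / x ^ j) (g x).
Proof.
  intro Hx.
  assert (Hz : Rabs (/ x) < 1).
  { rewrite Rabs_pos_eq by (left; apply Rinv_0_lt_compat; lra).
    rewrite <- Rinv_1. apply Rinv_lt_contravar; lra. }
  pose proof (Rbar_lt_CV_radius_bounded _ _ _ Rabs_coeff_le_e Hz) as Rc.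
  pose proof (PSeries_correct _ _ (CV_radius_inside _ _ Rc)) as P.
  rewrite (PSeries_coeff _ Hz) in P.
  replace (PSeries lncoef (/ x)) with (x * ln (1 + / x)) in P.
  2: { rewrite <- PSeries_lncoef by exact Hz. field. lra. }
  eapply is_series_ext; [| exact P].
  intro n. rewrite pow_n_pow. unfold scal; simpl. unfold mult; simpl.
  rewrite pow_inv. unfold Rdiv. ring.
Qed.

Definition alt (j : nat) : R := (-1) ^ j * c j.

Definition alt_diff (j : nat) : R :=
  match j with 0%nat => alt 0 | S k => alt (S k) - alt k end.

Lemma Rabs_alt_le_e (j : nat) : Rabs (alt j) <= exp 1.
Proof. unfold alt. rewrite Rabs_mult, pow_1_abs, Rmult_1_l. apply Rabs_coeff_le_e. Qed.

Lemma alt_rec (j : nat) :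
  INR (S j) * alt (S j) =
  sum_f_R0 alt j - sum_f_R0 (fun l => alt l * logder_coef (j - l)) j.
Proof.
  destruct Hc as [_ HS]. unfold alt at 1. rewrite HS, <- minus_sum.
  replace (INR (S j) * ((-1) ^ S j * (/ INR (S j) * sum_f_R0
      (fun l => (-1) ^ (j - l + 1) * (INR (j - l + 1) / INR (j - l + 2)) * c l) j)))
    with ((-1) ^ S j * sum_f_R0
      (fun l => (-1) ^ (j - l + 1) * (INR (j - l + 1) / INR (j - l + 2)) * c l) j)
    by (field; apply not_0_INR; lia).
  rewrite scal_sum. apply sum_eq; intros l Hl.
  unfold alt, logder_coef. rewrite <- (pow_m1_S_mul j l Hl).
  replace (j - l + 1)%nat with (S (j - l)) by lia.
  replace (j - l + 2)%nat with (S (S (j - l))) by lia.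
  rewrite (S_INR (S (j - l))). pose proof (INR_S_pos (j - l)).
  field. lra.
Qed.

Lemma alt_diff_rec (j : nat) :
  INR (S j) * alt_diff (S j) + sum_f_R0 (fun l => alt_diff l * logder_coef (j - l)) j = 0.
Proof.
  destruct j as [| k].
  - pose proof (alt_rec 0) as R0. simpl in *. unfold logder_coef in *. simpl in *. lra.
  - rewrite decomp_sum by lia. simpl pred.
    replace (sum_f_R0 (fun i => alt_diff (S i) * logder_coef (S k - S i)) k)
      with (sum_f_R0 (fun i => alt (S i) * logder_coef (k - i)) k
            - sum_f_R0 (fun i => alt i * logder_coef (k - i)) k)
      by (rewrite <- minus_sum; apply sum_eq; intros i _; simpl; ring).
    pose proof (alt_rec (S k)) as R1. pose proof (alt_rec k) as R2.
    rewrite tech5, (decomp_sum (fun l => alt l * logder_coef (S k - l))) in R1 by lia.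
    simpl pred in R1.
    replace (S k - 0)%nat with (S k) in * by lia.
    change (sum_f_R0 (fun i => alt (S i) * logder_coef (S k - S i)) k)
      with (sum_f_R0 (fun i => alt (S i) * logder_coef (k - i)) k) in R1.
    simpl alt_diff. rewrite (S_INR (S k)) in *. lra.
Qed.

Lemma alt_partial_sum (j : nat) : alt j = sum_f_R0 alt_diff j.
Proof. induction j as [| j IH]; simpl; [reflexivity |]. rewrite <- IH. ring. Qed.

Lemma alt_diff_split (j : nat) :
  INR (S j) * alt_diff (S j) =
  - alt j * logder_coef j
  - sum_f_R0 (fun l => alt_diff l * (logder_coef (j - l) - logder_coef j)) j.
Proof.
  pose proof (alt_diff_rec j) as R.
  assert (E : sum_f_R0 (fun l => alt_diff l * logder_coef (j - l)) j =
    sum_f_R0 (fun l => alt_diff l * (logder_coef (j - l) - logder_coef j)) j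
    + alt j * logder_coef j).
  { rewrite alt_partial_sum, (Rmult_comm (sum_f_R0 _ _)), scal_sum, <- plus_sum.
    apply sum_eq; intros; ring. }
  lra.
Qed.

Lemma alt_diff_bound_step (M : R) (j : nat) : 4 * exp 1 <= M -> (240 <= j)%nat ->
  (forall l, (l <= j)%nat -> Rabs (alt_diff l) <= M / INR (S l) ^ 2) ->
  Rabs (alt_diff (S j)) <= M / INR (S (S j)) ^ 2.
Proof.
  intros HM Hj Hd.
  pose proof (exp_pos 1).
  pose proof (convolution_tail_bound alt_diff M j ltac:(lra) Hd) as HR.
  pose proof (harm_contraction j Hj) as Hθ.
  pose proof (Rabs_alt_le_e j) as Ha.
  pose proof (alt_diff_split j) as D.
  assert (Hq : logder_coef j = / (INR j + 2)) by (unfold logder_coef; rewrite !S_INR; f_equal; ring).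
  set (Rem := sum_f_R0 _ j) in *.
  rewrite Hq in D. rewrite !S_INR in *. pose proof (pos_INR j).
  set (a := INR j) in *. set (X := Rabs (alt_diff (S j))).
  assert (HR' : Rabs Rem * (a + 2) <= M / 4).
  { apply Rle_trans with (M * (2 * harm (S j) / (a + 3))).
    2: { replace (M / 4) with (M * (1 / 4)) by field. apply Rmult_le_compat_l; lra. }
    apply Rmult_le_reg_r with (/ (a + 2)); [apply Rinv_0_lt_compat; lra |].
    rewrite Rmult_assoc, Rinv_r, Rmult_1_r by lra. unfold Rdiv in *. lra. }
  assert (HX : X * (a + 1) * (a + 2) <= exp 1 + M / 4).
  { assert (E : alt_diff (S j) * (a + 1) * (a + 2) = - alt j - Rem * (a + 2)).
    { rewrite (Rmult_comm _ (a + 1)), D. field. lra. }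
    unfold X. rewrite <- (Rabs_pos_eq (a + 1)), <- (Rabs_pos_eq (a + 2)) by lra.
    rewrite <- !Rabs_mult, E.
    eapply Rle_trans; [apply Rabs_triang |].
    rewrite !Rabs_Ropp, Rabs_mult, (Rabs_pos_eq (a + 2)) by lra. lra. }
  pose proof (Rabs_pos (alt_diff (S j))). fold X in H1.
  apply Rmult_le_reg_r with ((a + 1 + 1) ^ 2); [nra |].
  unfold Rdiv. rewrite Rmult_assoc, Rinv_l, Rmult_1_r by nra.
  nra.
Qed.

Lemma alt_diff_bound : exists M, 0 < M /\ forall n, Rabs (alt_diff n) <= M / INR (S n) ^ 2.
Proof.
  (* Past j = 240 the harmonic factor of [convolution_tail_bound] is below 1/4 and the
     induction closes; the first terms are absorbed into M. *)
  set (M := 4 * exp 1 + sum_f_R0 (fun l => Rabs (alt_diff l) * INR (S l) ^ 2) 240).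
  assert (Hterm : forall l, 0 <= Rabs (alt_diff l) * INR (S l) ^ 2)
    by (intro; apply Rmult_le_pos; [apply Rabs_pos | apply pow2_ge_0]).
  pose proof (cond_pos_sum _ 240 Hterm). pose proof (exp_pos 1).
  exists M. split; [unfold M; lra |].
  intro n. induction n as [n IH] using Wf_nat.lt_wf_ind.
  destruct (Nat.le_gt_cases n 240) as [Hsmall | Hlarge].
  - apply Rle_div_r; [apply pow_lt, INR_S_pos |].
    pose proof (sum_f_R0_ge_term _ n 240 Hterm Hsmall). unfold M. lra.
  - destruct n as [| j]; [lia |].
    apply alt_diff_bound_step; [unfold M; lra | lia |].
    intros l Hl. apply IH. lia.
Qed.

Section Rate.

Variable M : R.
Hypothesis HM : 0 < M.
Hypothesis Hd : forall n, Rabs (alt_diff n) <= M / INR (S n) ^ 2.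

Lemma alt_converges :
  exists l : R, is_lim_seq alt l /\ forall j, Rabs (alt j - l) <= M / INR (S j).
Proof.
  set (V := fun n => M / INR (S n)).
  assert (Hinc : forall m, Rabs (alt (S m) - alt m) <= V m - V (S m)).
  { intro m. apply (Rle_trans _ _ _ (Hd (S m))). unfold V, Rdiv.
    rewrite <- Rmult_minus_distr_l.
    apply Rmult_le_compat_l; [lra | apply inv_INR_sqr_le_sub]. }
  assert (HV : is_lim_seq V 0).
  { replace (Finite 0) with (Rbar_mult M 0) by (simpl; f_equal; ring).
    exact (is_lim_seq_scal_l _ M 0 is_lim_seq_inv_INR_S). }
  destruct (ex_finite_lim_seq_telescoping alt V Hinc HV) as [l Hl].
  exists l. split; [exact Hl |]. intro j.
  apply (lim_dist_le_telescoping alt V l j Hl (fun m _ => Hinc m)).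
  intros m _. unfold V. apply Rdiv_le_0_compat; [lra | apply INR_S_pos].
Qed.

(* Abel summation: the series of (alt n - l) t^n, whose sum is f(-t) - l / (1 - t), is
   dominated termwise by M times the series of t^n / (n + 1). *)
Lemma alt_abel_series (l : R) : (forall j, Rabs (alt j - l) <= M / INR (S j)) ->
  forall t, 0 < t < 1 ->
  Rabs (exp (PSeries lncoef (- t)) - l / (1 - t)) <= M * PSeries lncoef (- t).
Proof.
  intros Hl t Ht.
  assert (Hz : Rabs (- t) < 1) by (rewrite Rabs_Ropp, Rabs_pos_eq; lra).
  pose proof (Rbar_lt_CV_radius_bounded _ _ _ Rabs_coeff_le_e Hz) as Rc.
  pose proof (Rbar_lt_CV_radius_bounded _ _ _ Rabs_lncoef_le_1 Hz) as Rl.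
  pose proof (PSeries_correct _ _ (CV_radius_inside _ _ Rc)) as Pc.
  rewrite (PSeries_coeff _ Hz) in Pc.
  pose proof (PSeries_correct _ _ (CV_radius_inside _ _ Rl)) as PL.
  assert (Hg : is_series (fun n => t ^ n) (/ (1 - t)))
    by (apply is_series_geom; rewrite Rabs_pos_eq; lra).
  apply (is_series_Rabs_le (fun n => (alt n - l) * t ^ n) (fun n => M / INR (S n) * t ^ n)).
  - replace (exp (PSeries lncoef (- t)) - l / (1 - t))
      with (minus (exp (PSeries lncoef (- t))) (scal l (/ (1 - t)))) by reflexivity.
    apply (is_series_ext (fun n => minus (scal (pow_n (- t) n) (c n)) (scal l (t ^ n)))).
    + intro n. rewrite pow_n_pow.
      change ((- t) ^ n * c n + - (l * t ^ n) = (alt n - l) * t ^ n). unfold alt.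
      replace (- t) with (-1 * t) by ring. rewrite Rpow_mult_distr. ring.
    + exact (is_series_minus _ _ _ _ Pc (is_series_scal l _ _ Hg)).
  - apply (is_series_ext (fun n => scal M (scal (pow_n (- t) n) (lncoef n)))).
    + intro n. rewrite pow_n_pow.
      change (M * ((- t) ^ n * lncoef n) = M / INR (S n) * t ^ n). unfold lncoef.
      replace (- t) with (-1 * t) by ring. rewrite Rpow_mult_distr.
      transitivity (M * ((-1) ^ n * (-1) ^ n) * t ^ n / INR (S n));
        [field | rewrite pow_m1_sqr; field]; apply not_0_INR; lia.
    + exact (is_series_scal M _ _ PL).
  - intro n. rewrite Rabs_mult, (Rabs_pos_eq (t ^ n)) by (apply pow_le; lra).
    apply Rmult_le_compat_r; [apply pow_le; lra | apply Hl].
Qed.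

Lemma alt_abel_estimate (l : R) : (forall j, Rabs (alt j - l) <= M / INR (S j)) ->
  forall t, 0 < t < 1 ->
  Rabs (exp (- ((1 - t) * ln (1 - t)) / t) - l) <= M * (- ((1 - t) * ln (1 - t)) / t).
Proof.
  intros Hl t Ht.
  pose proof (alt_abel_series l Hl t Ht) as Key.
  set (L := PSeries lncoef (- t)) in *.
  assert (Hln : ln (1 - t) = - t * L).
  { unfold L. rewrite PSeries_lncoef by (rewrite Rabs_Ropp, Rabs_pos_eq; lra).
    f_equal; ring. }
  replace (- ((1 - t) * ln (1 - t)) / t) with ((1 - t) * L) by (rewrite Hln; field; lra).
  replace ((1 - t) * L) with (L + ln (1 - t)) at 1 by (rewrite Hln; ring).
  rewrite exp_plus, exp_ln by lra.
  replace (exp L * (1 - t) - l) with ((1 - t) * (exp L - l / (1 - t))) by (field; lra).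
  rewrite Rabs_mult, Rabs_pos_eq by lra.
  replace (M * ((1 - t) * L)) with ((1 - t) * (M * L)) by ring.
  apply Rmult_le_compat_l; lra.
Qed.

Lemma alt_limit_eq_1 (l : R) : (forall j, Rabs (alt j - l) <= M / INR (S j)) -> l = 1.
Proof.
  intro Hl.
  assert (H0 : Rabs (1 - l) <= 0).
  { apply Rle_plus_epsilon. intros eps Heps.
    assert (He : 0 < Rmin (1 / 2) (eps / (M + 2)))
      by (apply Rmin_pos; [lra | apply Rdiv_lt_0_compat; lra]).
    destruct (xlnx_small _ He) as [t [Ht [Ha0 Ha1]]].
    pose proof (alt_abel_estimate l Hl t Ht) as E.
    set (a := - ((1 - t) * ln (1 - t)) / t) in *.
    pose proof (Rmin_l (1 / 2) (eps / (M + 2))).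
    pose proof (Rmin_r (1 / 2) (eps / (M + 2))).
    assert (Hae : M * a + 2 * a <= eps).
    { replace (M * a + 2 * a) with ((M + 2) * a) by ring.
      apply Rle_trans with ((M + 2) * (eps / (M + 2))); [apply Rmult_le_compat_l; lra |].
      right. field. lra. }
    pose proof (exp_sub_1_le a ltac:(lra)).
    replace (1 - l) with ((exp a - l) - (exp a - 1)) by ring.
    eapply Rle_trans; [apply Rabs_triang |].
    rewrite Rabs_Ropp, (Rabs_pos_eq (exp a - 1)) by lra. lra. }
  pose proof (Rabs_pos (1 - l)).
  assert (1 - l = 0) by (apply Rabs_eq_0; lra). lra.
Qed.

Section Refined.

Hypothesis Hlim : is_lim_seq alt 1.
Hypothesis Hl1 : forall j, Rabs (alt j - 1) <= M / INR (S j).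

Lemma alt_diff_refined_scaled (m : nat) :
  Rabs (alt_diff (S m) + / (INR (S m) * INR (S (S m)))) * (INR (S m) * INR (S (S m)))
    <= M / INR (S m) + 2 * M * harm (S m) / (INR m + 3).
Proof.
  pose proof (convolution_tail_bound alt_diff M m ltac:(lra) (fun l _ => Hd l)) as HR.
  pose proof (alt_diff_split m) as D.
  pose proof (Hl1 m) as HX.
  assert (Hq : logder_coef m = / (INR m + 2))
    by (unfold logder_coef; rewrite !S_INR; f_equal; ring).
  set (Rem := sum_f_R0 _ m) in *.
  rewrite Hq in D. rewrite !S_INR in *. pose proof (pos_INR m).
  set (a := INR m) in *.
  assert (EZ : (alt_diff (S m) + / ((a + 1) * (a + 1 + 1))) * ((a + 1) * (a + 1 + 1))
               = - (alt m - 1) - Rem * (a + 2)).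
  { rewrite Rmult_plus_distr_r.
    replace (alt_diff (S m) * ((a + 1) * (a + 1 + 1)))
      with ((a + 1) * alt_diff (S m) * (a + 2)) by ring.
    rewrite D. field. lra. }
  rewrite <- (Rabs_pos_eq ((a + 1) * (a + 1 + 1))) at 2 by nra. rewrite <- Rabs_mult, EZ.
  eapply Rle_trans; [apply Rabs_triang |].
  rewrite !Rabs_Ropp, Rabs_mult, (Rabs_pos_eq (a + 2)) by lra.
  apply Rplus_le_compat; [exact HX |].
  apply Rle_trans with (M / (a + 2) * (2 * harm (S m) / (a + 3)) * (a + 2)).
  - apply Rmult_le_compat_r; lra.
  - right. field. lra.
Qed.

Lemma alt_diff_refined (m : nat) : (1 <= m)%nat ->
  Rabs (alt_diff (S m) + / (INR (S m) * INR (S (S m))))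
    <= 3 * M * (harm_majorant m - harm_majorant (S m)).
Proof.
  intro Hm.
  pose proof (harm_majorant_diff m Hm) as HV.
  pose proof (alt_diff_refined_scaled m) as HZ.
  pose proof (harm_ge_1 (S m) ltac:(lia)) as H1.
  rewrite !S_INR in *. pose proof (pos_INR m).
  set (a := INR m) in *. set (h := harm (S m)) in *.
  set (Z := Rabs (alt_diff (S m) + / ((a + 1) * (a + 1 + 1)))) in *.
  apply Rle_trans with (3 * M * (h / ((a + 1) ^ 2 * (a + 1 + 1)))).
  2: { apply Rmult_le_compat_l; lra. }
  apply Rmult_le_reg_r with ((a + 1) ^ 2 * (a + 2)); [nra |].
  replace (3 * M * (h / ((a + 1) ^ 2 * (a + 1 + 1))) * ((a + 1) ^ 2 * (a + 2)))
    with (3 * M * h) by (field; lra).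
  assert (EM : M / (a + 1) * (a + 1) = M) by (field; lra).
  assert (EW : 2 * M * h / (a + 3) * (a + 3) = 2 * M * h) by (field; lra).
  assert (HW : 0 <= 2 * M * h / (a + 3)) by (apply Rdiv_le_0_compat; nra).
  set (W := 2 * M * h / (a + 3)) in *. set (N := M / (a + 1)) in *.
  assert (0 <= Z) by apply Rabs_pos.
  nra.
Qed.

Lemma alt_refined (j : nat) : (1 <= j)%nat ->
  Rabs (alt j - / INR (S j) - 1) <= 3 * M * harm_majorant j.
Proof.
  intro Hj.
  pose proof (is_lim_seq_minus' _ _ _ _ Hlim is_lim_seq_inv_INR_S) as Hu.
  rewrite Rminus_0_r in Hu.
  apply (lim_dist_le_telescoping _ (fun n => 3 * M * harm_majorant n) 1 j Hu).
  - intros m Hm.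
    replace (alt (S m) - / INR (S (S m)) - (alt m - / INR (S m)))
      with (alt_diff (S m) + / (INR (S m) * INR (S (S m)))).
    + rewrite <- Rmult_minus_distr_l. apply alt_diff_refined. lia.
    + change (alt_diff (S m)) with (alt (S m) - alt m).
      rewrite (S_INR (S m)). pose proof (INR_S_pos m). field. lra.
  - intros m Hm. pose proof (harm_majorant_ge_0 m ltac:(lia)). nra.
Qed.

Lemma coeff_asymptotic : exists (K : R) (N : nat), forall j : nat, (N <= j)%nat ->
  Rabs (c j - (-1) ^ j * (1 + / INR j)) <= K * (ln (INR j) / INR j ^ 2).
Proof.
  exists (9 * M + 1), 3%nat. intros j Hj.
  pose proof (alt_refined j ltac:(lia)) as HA. unfold harm_majorant in HA.
  pose proof (harm_le_1_ln j ltac:(lia)) as Hh. pose proof (harm_ge_0 j) as Hh0.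
  assert (Hj3 : 3 <= INR j) by (replace 3 with (INR 3) by (simpl; ring); now apply le_INR).
  assert (Hln : 1 <= ln (INR j)).
  { rewrite <- (ln_exp 1). apply ln_le; [apply exp_pos | pose proof exp_le_3; lra]. }
  replace (c j - (-1) ^ j * (1 + / INR j)) with ((-1) ^ j * (alt j - 1 - / INR j)).
  2: { unfold alt. transitivity ((-1) ^ j * (-1) ^ j * c j - (-1) ^ j * (1 + / INR j));
       [ring | rewrite pow_m1_sqr; ring]. }
  rewrite Rabs_mult, pow_1_abs, Rmult_1_l. rewrite S_INR in HA.
  set (a := INR j) in *. set (h := harm j) in *.
  replace (alt j - 1 - / a) with ((alt j - / (a + 1) - 1) - / (a * (a + 1))) by (field; lra).
  eapply Rle_trans; [apply Rabs_triang |].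
  rewrite Rabs_Ropp, (Rabs_pos_eq (/ (a * (a + 1)))) by (left; apply Rinv_0_lt_compat; nra).
  apply Rle_trans with ((3 * M * (h + 1) + 1) / (a * a)).
  { apply Rle_trans with ((3 * M * (h + 1) + 1) / (a * (a + 1))).
    - replace ((3 * M * (h + 1) + 1) / (a * (a + 1)))
        with (3 * M * ((h + 1) / (a * (a + 1))) + / (a * (a + 1))) by (field; lra).
      lra.
    - apply Rmult_le_compat_l; [nra | apply Rinv_le_contravar; nra]. }
  apply Rmult_le_reg_r with (a * a); [nra |].
  replace ((3 * M * (h + 1) + 1) / (a * a) * (a * a)) with (3 * M * (h + 1) + 1) by (field; lra).
  replace ((9 * M + 1) * (ln a / a ^ 2) * (a * a)) with ((9 * M + 1) * ln a) by (field; lra).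
  nra.
Qed.

End Refined.

End Rate.

End Coefficients.

Theorem mainTheorem1 (c : nat -> R) (Hc : coeff_rec c) :
  (forall x : R, 1 < x -> is_series (fun j => c j / x ^ j) (g x)) /\
  (exists (K : R) (N : nat), forall j : nat, (N <= j)%nat ->
     Rabs (c j - (-1) ^ j * (1 + / INR j)) <= K * (ln (INR j) / INR j ^ 2)).
Proof.
  split; [exact (is_series_g c Hc) |].
  destruct (alt_diff_bound c Hc) as [M [HM Hd]].
  destruct (alt_converges c M HM Hd) as [l [Hlim Hl]].
  pose proof (alt_limit_eq_1 c Hc M HM l Hl) as E. subst l.
  exact (coeff_asymptotic c Hc M HM Hd Hlim Hl).
Qed.
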